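(* Let $\mathcal{H}$ be a complex Hilbert space and $A,B,X\in\mathcal{B}(\mathcal{H})$. Then \[ \omega(A^{*}XB)\leq \frac{1}{4}\|AA^{*}X+XBB^{*}\|+\frac{1}{2}\,\omega\!\left(\begin{bmatrix} XBA^{*}&0\\ 0& BA^{*}X \end{bmatrix}\right), \] where the $2\times 2$ operator matrix acts on $\mathcal{H}\oplus\mathcal{H}$.
   Context: $\omega(T)=\sup\{|\langle Tx,x\rangle|:\|x\|=1\}$ denotes the numerical radius and $\|\cdot\|$ the operator norm. *)

From HB Require Import structures.
From mathcomp Require Import all_boot all_order all_algebra.
From mathcomp Require Import complex.
From mathcomp Require Import all_classical all_reals ereal.
Set Implicit Arguments. Unset Strict Implicit. Unset Printing Implicit Defensive.
Import Order.TTheory GRing.Theory Num.Theory.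
Local Open Scope ring_scope.
Local Open Scope classical_set_scope.

Section Hilbert.
Variable R : realType.

Definition hnorm {U : Type} (ip : U -> U -> R[i]) (x : U) : R :=
  Num.sqrt (complex.Re (ip x x)).

Definition is_inner_product (V : lmodType R[i]) (ip : V -> V -> R[i]) : Prop :=
  [/\ (forall (a : R[i]) (x y z : V), ip (a *: x + y) z = a * ip x z + ip y z),
      (forall x y : V, ip y x = (ip x y)^*%C),
      (forall x : V, 0 <= ip x x) &
      (forall x : V, ip x x = 0 -> x = 0)].

Definition ip_complete (V : lmodType R[i]) (ip : V -> V -> R[i]) : Prop :=
  forall u : nat -> V,
    (forall e : R, 0 < e -> exists N : nat, forall m n : nat,
        (N <= m)%N -> (N <= n)%N -> hnorm ip (u m - u n) < e) ->
    exists l : V, forall e : R, 0 < e -> exists N : nat, forall n : nat,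
        (N <= n)%N -> hnorm ip (u n - l) < e.

Definition is_hilbert (V : lmodType R[i]) (ip : V -> V -> R[i]) : Prop :=
  is_inner_product ip /\ ip_complete ip.

Definition bounded_op (V : lmodType R[i]) (ip : V -> V -> R[i]) (T : V -> V) : Prop :=
  [/\ (forall x y : V, T (x + y) = T x + T y),
      (forall (a : R[i]) (x : V), T (a *: x) = a *: T x) &
      exists M : R, forall x : V, hnorm ip (T x) <= M * hnorm ip x].

Definition is_adjoint (V : lmodType R[i]) (ip : V -> V -> R[i]) (T Ts : V -> V) : Prop :=
  forall x y : V, ip (T x) y = ip x (Ts y).

Definition opnorm {U : Type} (ip : U -> U -> R[i]) (T : U -> U) : \bar R :=
  ereal_sup [set (hnorm ip (T x))%:E | x in [set x | hnorm ip x = 1]].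

Definition numrad {U : Type} (ip : U -> U -> R[i]) (T : U -> U) : \bar R :=
  ereal_sup [set (complex.Re `|ip (T x) x|)%:E | x in [set x | hnorm ip x = 1]].

Definition dsum_ip {V : Type} (ip : V -> V -> R[i]) (p q : V * V) : R[i] :=
  ip p.1 q.1 + ip p.2 q.2.

End Hilbert.

Definition opmx {V : zmodType} (T11 T12 T21 T22 : V -> V) (p : V * V) : V * V :=
  (T11 p.1 + T12 p.2, T21 p.1 + T22 p.2)%R.

(* Rotate: pick |u| = 1 with u <A^*XB x0, x0> = |<A^*XB x0, x0>| and let s be the real
   symmetric form of T + T^* for T = u A^*XB, so that s(x0, x0) = 2 |<A^*XB x0, x0>|.
   Put N = AA^*X + XBB^*, K = A^*A + B^*B, a = A x and b = B x.  The adjoint relations give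
     s(K x, x) = Re u (<XBA^* a, a> + <BA^*X b, b>) + Re u <N b, a>
              <= (w + n/2) (|a|^2 + |b|^2) = (w + n/2) <K x, x>,
   where n = |N| and w is the numerical radius of diag(XBA^*, BA^*X).  Such a bound on
   s(K x, x) forces s(x, x) <= w + n/2 on the unit sphere: if l = sup s(x, x) exceeded
   c = w + n/2, then l - s would be a positive form, and its Cauchy-Schwarz inequality
   at (K x, x), together with s(x, x) <= |X| <K x, x>, gives
   ((l - c) s(x, x))^2 = O(l - s(x, x)), which is impossible for s(x, x) close to l > 0. *)

From Pilot Require Import Defs.
From HB Require Import structures.
From mathcomp Require Import all_boot all_order all_algebra.
From mathcomp Require Import complex.
From mathcomp Require Import all_classical all_reals ereal.
From mathcomp Require Import ring lra.
Set Implicit Arguments.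
Unset Strict Implicit.
Unset Printing Implicit Defensive.
Import Order.TTheory GRing.Theory Num.Theory.
Local Open Scope ring_scope.
Local Open Scope classical_set_scope.

Local Notation Re := complex.Re.

Lemma nonneg_quadratic_discriminant (R : realFieldType) (a b c : R) : 0 <= c ->
  (forall t, 0 <= a + t * (2 * b) + t ^+ 2 * c) -> b ^+ 2 <= a * c.
Proof.
move=> c_ge0 nonneg.
have [c0|c_neq0] := eqVneq c 0.
  suff -> : b = 0 by rewrite c0 expr0n mulr0.
  apply/eqP; apply/negPn/negP => b_neq0.
  have := nonneg (- (a + 1) / (2 * b)); rewrite c0 mulr0 addr0.
  by rewrite mulrAC -mulrA divff ?mulf_neq0 // mulr1; lra.
have c_gt0 : 0 < c by rewrite lt_def c_neq0.
have := nonneg (- (b / c)); rewrite -{2 4}(divfK c_neq0 b).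
set v := b / c; rewrite !expr2; nra.
Qed.

Lemma sup_quadratic_gap (R : realType) (S : set R) (k C : R) :
  has_sup S -> 0 < sup S -> 0 <= C ->
  (forall s, S s -> 0 <= s -> k * s ^+ 2 <= C * (sup S - s)) -> k <= 0.
Proof.
move=> S_sup l_gt0 C_ge0 gap; rewrite leNgt; apply/negP => k_gt0.
set l := sup S in l_gt0 gap.
have l2_gt0 : 0 < l / 2 by rewrite divr_gt0.
pose q := k * (l / 2) ^+ 2.
have q_gt0 : 0 < q by rewrite mulr_gt0 // exprn_gt0.
pose r := q / (C + 1).
have C1_gt0 : 0 < C + 1 by lra.
have r_gt0 : 0 < r by rewrite divr_gt0.
have Cr_lt : C * r < q by rewrite -[X in _ < X](divfK (lt0r_neq0 C1_gt0)) -/r; nra.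
pose e := Order.min (l / 2) r.
have e_gt0 : 0 < e by rewrite lt_min r_gt0 l2_gt0.
have [e_le_l e_le_r] : e <= l / 2 /\ e <= r by split; rewrite ge_min lexx ?orbT.
have [s Ss] := sup_adherent e_gt0 S_sup; rewrite -/l => s_gt.
have s_ge : l / 2 <= s by lra.
have q_le : q <= k * s ^+ 2.
  by rewrite /q ler_wpM2l ?(ltW k_gt0) // ler_pXn2r ?nnegrE //; lra.
have : C * (l - s) <= C * r by rewrite ler_wpM2l //; lra.
have := gap s Ss ltac:(lra); lra.
Qed.

Lemma lee_pos_combination (R : realType) (y a b : R) (P Q : \bar R) :
  0 < a -> 0 < b -> (-oo < P)%E -> (-oo < Q)%E ->
  (forall p q : R, P = p%:E -> Q = q%:E -> y <= a * p + b * q) ->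
  (y%:E <= a%:E * P + b%:E * Q)%E.
Proof.
move=> a_gt0 b_gt0.
have [aoo boo] : (a%:E * +oo = +oo /\ b%:E * +oo = +oo)%E.
  by split; rewrite mulry gtr0_sg // mul1e.
case: P => [p| |] // _; case: Q => [q| |] // _ y_le.
- by rewrite -!EFinM -EFinD lee_fin y_le.
- by rewrite boo -EFinM addey ?leey.
- by rewrite aoo -EFinM addye ?leey.
- by rewrite aoo boo addye ?leey.
Qed.

Section Complex.
Variable R : realType.
Local Open Scope complex_scope.

Lemma Re_realM (t : R) (z : R[i]) : Re (t%:C * z) = t * Re z.
Proof. by case: z => a b /=; rewrite mul0r subr0. Qed.

Lemma Re_conjc (z : R[i]) : Re z^*%C = Re z.
Proof. by case: z. Qed.

Lemma Re_le_normc (z : R[i]) : Re z <= Re `|z|.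
Proof.
have /andP[_ /= Rez_le] := normc_ge_Re z.
exact: le_trans (ler_norm _) Rez_le.
Qed.

Lemma Re_normc_ge0 (z : R[i]) : 0 <= Re `|z|.
Proof. by rewrite normc_def /= sqrtr_ge0. Qed.

Lemma normc_real (t : R) : 0 <= t -> `|t%:C| = t%:C.
Proof. by move=> t_ge0; rewrite ger0_norm // lecE /= eqxx t_ge0. Qed.

Lemma unit_rotation (z : R[i]) : exists2 u : R[i], `|u| = 1 & u * z = `|z|.
Proof.
have [->|z_neq0] := eqVneq z 0; first by exists 1; rewrite ?normr1 // mulr0 normr0.
exists (`|z| / z); last by rewrite mulfVK.
by rewrite normrM normfV normr_id divff // normr_eq0.
Qed.

Lemma Re_rotate_le_normc (u z : R[i]) : `|u| = 1 -> Re (u * z) <= Re `|z|.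
Proof. by move=> u1; rewrite -[`|z|]mul1r -u1 -normrM Re_le_normc. Qed.

End Complex.

Section InnerProduct.
Variables (R : realType) (V : lmodType R[i]) (ip : V -> V -> R[i]).
Hypothesis ipP : is_inner_product ip.
Local Open Scope complex_scope.
Local Notation hnorm := (hnorm ip).

Lemma exists_pos_bound (T : V -> V) :
  (exists M, forall x, hnorm (T x) <= M * hnorm x) ->
  exists2 M, 0 < M & forall x, hnorm (T x) <= M * hnorm x.
Proof.
case=> M T_le; exists (`|M| + 1) => [|x]; first by rewrite ltr_wpDl.
apply: le_trans (T_le x) _; rewrite ler_wpM2r ?sqrtr_ge0 //.
by rewrite (le_trans (ler_norm M)) // lerDl.
Qed.

Lemma ipDl x y z : ip (x + y) z = ip x z + ip y z.
Proof. by case: ipP => linl _ _ _; rewrite -[x]scale1r linl mul1r scale1r. Qed.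

Lemma ip0l z : ip 0 z = 0.
Proof. by apply: (@addrI _ (ip 0 z)); rewrite -ipDl !addr0. Qed.

Lemma ipZl a x z : ip (a *: x) z = a * ip x z.
Proof. by case: ipP => linl _ _ _; rewrite -[a *: x]addr0 linl ip0l addr0. Qed.

Lemma ipC x y : ip y x = (ip x y)^*%C.
Proof. by case: ipP. Qed.

Lemma ipDr x y z : ip z (x + y) = ip z x + ip z y.
Proof. by rewrite (ipC (x + y)) (ipC x z) (ipC y z) ipDl rmorphD. Qed.

Lemma ipZr a x z : ip z (a *: x) = a^*%C * ip z x.
Proof. by rewrite (ipC (a *: x)) (ipC x z) ipZl rmorphM. Qed.

Lemma ip0r z : ip z 0 = 0.
Proof. by rewrite ipC ip0l conjc0. Qed.

Lemma ipNr y z : ip z (- y) = - ip z y.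
Proof. by apply/eqP; rewrite -addr_eq0 -ipDr addNr ip0r. Qed.

Lemma ip_extr v w : (forall x, ip x v = ip x w) -> v = w.
Proof.
move=> eq_vw; apply/eqP; rewrite -subr_eq0; apply/eqP.
case: ipP => _ _ _ definite; apply: definite.
by rewrite ipDr ipNr eq_vw subrr.
Qed.

Lemma Re_ipC p q : Re (ip p q) = Re (ip q p).
Proof. by rewrite ipC Re_conjc. Qed.

Lemma Re_ip_ge0 p : 0 <= Re (ip p p).
Proof. by case: ipP => _ _ /(_ p) + _; rewrite lecE => /andP[]. Qed.

Lemma hnorm_ge0 p : 0 <= hnorm p.
Proof. exact: sqrtr_ge0. Qed.

Lemma sqr_hnorm p : hnorm p ^+ 2 = Re (ip p p).
Proof. by rewrite sqr_sqrtr // Re_ip_ge0. Qed.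

Lemma hnorm0 : hnorm 0 = 0.
Proof. by rewrite /hnorm ip0l sqrtr0. Qed.

Lemma hnorm_eq0 p : hnorm p = 0 -> p = 0.
Proof.
move=> p0; case: ipP => _ _ /(_ p) + /(_ p) -> //.
have : Re (ip p p) = 0 by rewrite -sqr_hnorm p0 expr0n.
by rewrite lecE; case: (ip p p) => a b /= -> /andP[/eqP -> _].
Qed.

Lemma Re_ip_expand p q (t : R) :
  Re (ip (p + t%:C *: q) (p + t%:C *: q)) =
  Re (ip p p) + t * (2 * Re (ip p q)) + t ^+ 2 * Re (ip q q).
Proof.
rewrite ipDl !ipDr !ipZl !ipZr conjc_real !raddfD /= !Re_realM.
by rewrite (Re_ipC q p); ring.
Qed.

Lemma form_cauchy_schwarz (f : V -> V -> R) :
  (forall p q (t : R),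
     f (p + t%:C *: q) (p + t%:C *: q) = f p p + t * (2 * f p q) + t ^+ 2 * f q q) ->
  (forall p, 0 <= f p p) -> forall p q, f p q ^+ 2 <= f p p * f q q.
Proof.
move=> f_expand f_ge0 p q.
by apply: nonneg_quadratic_discriminant => // t; rewrite -f_expand.
Qed.

Lemma normr_Re_ip_le p q : `|Re (ip p q)| <= hnorm p * hnorm q.
Proof.
rewrite -(ler_pXn2r (n := 2)) ?nnegrE ?mulr_ge0 ?hnorm_ge0 //.
rewrite real_normK ?num_real // exprMn !sqr_hnorm.
exact: (form_cauchy_schwarz (f := fun p q => Re (ip p q)) Re_ip_expand Re_ip_ge0).
Qed.

Lemma Re_ip_le p q : Re (ip p q) <= hnorm p * hnorm q.
Proof. exact: le_trans (ler_norm _) (normr_Re_ip_le p q). Qed.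

Lemma hnormD_le p q : hnorm (p + q) <= hnorm p + hnorm q.
Proof.
rewrite -(ler_pXn2r (n := 2)) ?nnegrE ?addr_ge0 ?hnorm_ge0 //.
rewrite sqr_hnorm -[q]scale1r Re_ip_expand scale1r -!sqr_hnorm.
have := Re_ip_le p q; rewrite !expr2; lra.
Qed.

Lemma hnormZ a p : hnorm (a *: p) = Re `|a| * hnorm p.
Proof.
rewrite /hnorm ipZl ipZr mulrA -sqr_normc normc_def -rmorphXn Re_realM.
by rewrite sqrtrM ?sqr_ge0 // sqrtr_sqr ger0_norm // -normc_def Re_normc_ge0.
Qed.

Lemma hnormZ_unit (u : R[i]) p : `|u| = 1 -> hnorm (u *: p) = hnorm p.
Proof. by move=> u1; rewrite hnormZ u1 mul1r. Qed.

Lemma hnormZ_real (t : R) p : 0 <= t -> hnorm (t%:C *: p) = t * hnorm p.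
Proof. by move=> t_ge0; rewrite hnormZ normc_real. Qed.

Lemma Re_rotate_ip_le (u : R[i]) p q : `|u| = 1 -> Re (u * ip p q) <= hnorm p * hnorm q.
Proof. by move=> u1; rewrite -ipZl -(hnormZ_unit p u1) Re_ip_le. Qed.

Lemma homogeneous0 (T : V -> V) : (forall (a : R[i]) x, T (a *: x) = a *: T x) -> T 0 = 0.
Proof. by move=> TZ; rewrite -(scale0r (0 : V)) TZ !scale0r. Qed.

Lemma hnorm_normalize x : hnorm x != 0 -> hnorm ((hnorm x)^-1%:C *: x) = 1.
Proof. by move=> x_neq0; rewrite hnormZ_real ?invr_ge0 ?hnorm_ge0 // mulVf. Qed.

Section Homogeneous.
Variable T : V -> V.
Hypothesis TZ : forall (a : R[i]) x, T (a *: x) = a *: T x.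

Lemma hnorm_le_of_unit (n : R) :
  (forall x, hnorm x = 1 -> hnorm (T x) <= n) -> forall x, hnorm (T x) <= n * hnorm x.
Proof.
move=> T_le x; have [/hnorm_eq0 ->|x_neq0] := eqVneq (hnorm x) 0.
  by rewrite homogeneous0 // hnorm0 mulr0.
have x_gt0 : 0 < hnorm x by rewrite lt_def x_neq0 hnorm_ge0.
have := T_le _ (hnorm_normalize x_neq0).
by rewrite TZ hnormZ_real ?invr_ge0 ?hnorm_ge0 // ler_pdivrMl // mulrC.
Qed.

Lemma numrad_le_of_unit (w : R) :
  (forall x, hnorm x = 1 -> Re `|ip (T x) x| <= w) ->
  forall x, Re `|ip (T x) x| <= w * hnorm x ^+ 2.
Proof.
move=> T_le x; have [/hnorm_eq0 ->|x_neq0] := eqVneq (hnorm x) 0.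
  by rewrite homogeneous0 // ip0l normr0 hnorm0 expr0n mulr0.
have x_gt0 : 0 < hnorm x by rewrite lt_def x_neq0 hnorm_ge0.
have := T_le _ (hnorm_normalize x_neq0).
rewrite TZ ipZl ipZr conjc_real mulrA -rmorphM normrM normc_real; last first.
  by rewrite mulr_ge0 ?invr_ge0 ?hnorm_ge0.
by rewrite Re_realM -expr2 exprVn ler_pdivrMl ?exprn_gt0 // mulrC.
Qed.

End Homogeneous.

Section Adjoint.
Variables T Ts : V -> V.
Hypothesis adjT : is_adjoint ip T Ts.

Lemma adjointZ a y : Ts (a *: y) = a *: Ts y.
Proof. by apply: ip_extr => x; rewrite -adjT !ipZr adjT. Qed.

Lemma adjointD y z : Ts (y + z) = Ts y + Ts z.
Proof. by apply: ip_extr => x; rewrite -adjT !ipDr -!adjT. Qed.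

Lemma ip_adjointr p q : ip p (T q) = ip (Ts p) q.
Proof. by rewrite ipC adjT -ipC. Qed.

Lemma adjoint_bounded (M : R) : (forall x, hnorm (T x) <= M * hnorm x) ->
  forall y, hnorm (Ts y) <= M * hnorm y.
Proof.
move=> T_le y.
have sq : hnorm (Ts y) ^+ 2 <= M * hnorm (Ts y) * hnorm y.
  rewrite sqr_hnorm -adjT; apply: le_trans (Re_ip_le _ _) _.
  by rewrite ler_wpM2r ?hnorm_ge0.
have [->|Tsy_neq0] := eqVneq (hnorm (Ts y)) 0.
  exact: le_trans (hnorm_ge0 _) (T_le y).
by rewrite expr2 mulrAC ler_pM2r ?lt_def ?Tsy_neq0 ?hnorm_ge0 in sq.
Qed.

End Adjoint.

(* [realform T x x = 2 Re <T x, x>] is the real quadratic form of [T + T^*], expressed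
   without the adjoint of [T]. *)
Definition realform (T : V -> V) p q := Re (ip (T p) q) + Re (ip (T q) p).

Section RealForm.
Variable T : V -> V.
Hypothesis TD : forall x y, T (x + y) = T x + T y.
Hypothesis TZ : forall (a : R[i]) x, T (a *: x) = a *: T x.

Lemma realform_expand p q (t : R) :
  realform T (p + t%:C *: q) (p + t%:C *: q) =
  realform T p p + t * (2 * realform T p q) + t ^+ 2 * realform T q q.
Proof.
by rewrite /realform TD TZ !ipDl !ipDr !ipZl !ipZr conjc_real !raddfD /= !Re_realM; ring.
Qed.

Lemma realformZ_real (t : R) y :
  realform T (t%:C *: y) (t%:C *: y) = t ^+ 2 * realform T y y.
Proof.
rewrite -[t%:C *: y]add0r realform_expand /realform homogeneous0 //.
by rewrite !ip0l !ip0r /= !addr0 !mulr0 !add0r.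
Qed.

Lemma realform_le_of_unit (l : R) :
  (forall x, hnorm x = 1 -> realform T x x <= l) ->
  forall y, realform T y y <= l * hnorm y ^+ 2.
Proof.
move=> T_le y; have [/hnorm_eq0 ->|y_neq0] := eqVneq (hnorm y) 0.
  by rewrite /realform homogeneous0 // ip0l hnorm0 expr0n mulr0 /= addr0.
have y_gt0 : 0 < hnorm y by rewrite lt_def y_neq0 hnorm_ge0.
have := T_le _ (hnorm_normalize y_neq0).
by rewrite realformZ_real exprVn ler_pdivrMl ?exprn_gt0 // mulrC.
Qed.

Lemma normr_realform_le (MT : R) : (forall x, hnorm (T x) <= MT * hnorm x) ->
  forall y, `|realform T y y| <= 2 * MT * hnorm y ^+ 2.
Proof.
move=> T_le y; rewrite /realform -mulr2n normrMn -mulrA mulr_natl lerMn2r /=.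
apply: le_trans (normr_Re_ip_le _ _) _.
by rewrite expr2 mulrA ler_wpM2r ?hnorm_ge0.
Qed.

Section Compression.
Variables (K : V -> V) (MT MK M c : R).
Hypothesis T_le : forall x, hnorm (T x) <= MT * hnorm x.
Hypothesis K_le : forall x, hnorm (K x) <= MK * hnorm x.
Hypotheses (M_gt0 : 0 < M) (c_ge0 : 0 <= c).
Hypothesis realform_le_K : forall x, realform T x x <= M * Re (ip (K x) x).
Hypothesis realform_K_le : forall x, realform T (K x) x <= c * Re (ip (K x) x).

Lemma realform_compression_gap (l : R) x :
  c <= l -> (forall y, hnorm y = 1 -> realform T y y <= l) ->
  hnorm x = 1 -> 0 <= realform T x x ->
  ((l - c) / M) ^+ 2 * realform T x x ^+ 2
    <= (l + 2 * MT) * MK ^+ 2 * (l - realform T x x).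
Proof.
move=> c_le_l l_ub x1 s_ge0.
pose g p q := l * Re (ip p q) - realform T p q.
have g_ge0 p : 0 <= g p p.
  by rewrite subr_ge0 -sqr_hnorm; exact: realform_le_of_unit l_ub p.
have g_expand p q (t : R) :
    g (p + t%:C *: q) (p + t%:C *: q) = g p p + t * (2 * g p q) + t ^+ 2 * g q q.
  by rewrite /g Re_ip_expand realform_expand; ring.
have gxx : g x x = l - realform T x x by rewrite /g -sqr_hnorm x1 expr1n mulr1.
have gKK : g (K x) (K x) <= (l + 2 * MT) * MK ^+ 2.
  have MT_ge0 : 0 <= MT by rewrite -[MT]mulr1 -x1 (le_trans (hnorm_ge0 _) (T_le x)).
  have Kx_le : hnorm (K x) <= MK by rewrite -[MK]mulr1 -x1 K_le.
  have {}Kx_le : hnorm (K x) ^+ 2 <= MK ^+ 2.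
    by rewrite ler_pXn2r ?nnegrE ?hnorm_ge0 // (le_trans (hnorm_ge0 _) Kx_le).
  have := normr_realform_le T_le (K x); rewrite ler_norml => /andP[+ _].
  have : 0 <= l + 2 * MT by rewrite addr_ge0 ?mulr_ge0 // (le_trans c_ge0).
  rewrite /g -sqr_hnorm; nra.
set s := realform T x x in s_ge0 gxx *.
have gKx : (l - c) * (s / M) <= g (K x) x.
  have e_ge : s / M <= Re (ip (K x) x) by rewrite ler_pdivrMr // mulrC realform_le_K.
  have : 0 <= (l - c) * (Re (ip (K x) x) - s / M).
    by apply: mulr_ge0; rewrite subr_ge0.
  have := realform_K_le x; rewrite /g; lra.
have lower_ge0 : 0 <= (l - c) * (s / M).
  by apply: mulr_ge0; [rewrite subr_ge0 | rewrite divr_ge0 // ltW].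
rewrite -gxx -exprMn mulrAC -mulrA.
apply: le_trans (_ : _ <= g (K x) x ^+ 2) _.
  by rewrite ler_pXn2r ?nnegrE // (le_trans lower_ge0 gKx).
apply: le_trans (form_cauchy_schwarz g_expand g_ge0 _ _) _.
by rewrite ler_wpM2r ?g_ge0.
Qed.

Lemma realform_le_of_compression x0 : hnorm x0 = 1 -> realform T x0 x0 <= c.
Proof.
move=> x0_unit.
pose S := [set realform T x x | x in [set x | hnorm x = 1]].
have S_sup : has_sup S.
  split; first by exists (realform T x0 x0), x0.
  exists (2 * MT) => _ [x x1 <-]; apply: le_trans (ler_norm _) _.
  by have := normr_realform_le T_le x; rewrite x1 expr1n mulr1.
set l := sup S.
have l_ub x : hnorm x = 1 -> realform T x x <= l.
  by move=> x1; apply: sup_upper_bound => //; exists x.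
apply: le_trans (l_ub _ x0_unit) _; rewrite leNgt; apply/negP => c_lt_l.
have l_gt0 : 0 < l by apply: le_lt_trans c_lt_l.
have C_ge0 : 0 <= (l + 2 * MT) * MK ^+ 2.
  have MT_ge0 : 0 <= MT by rewrite -[MT]mulr1 -x0_unit (le_trans (hnorm_ge0 _) (T_le x0)).
  by rewrite mulr_ge0 ?sqr_ge0 // addr_ge0 ?mulr_ge0 // ltW.
suff : ((l - c) / M) ^+ 2 <= 0 by rewrite leNgt exprn_gt0 // divr_gt0 // subr_gt0.
apply: (sup_quadratic_gap S_sup l_gt0 C_ge0) => _ [x x1 <-].
exact: realform_compression_gap (ltW c_lt_l) l_ub x1.
Qed.

End Compression.

End RealForm.

End InnerProduct.

Lemma dsum_is_inner_product (R : realType) (V : lmodType R[i]) (ip : V -> V -> R[i]) :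
  is_inner_product ip -> is_inner_product (V := (V * V)%type) (dsum_ip ip).
Proof.
move=> ipP; have [_ _ ip_ge0 ip_definite] := ipP; split.
- by move=> a x y z; rewrite /dsum_ip /= !(ipDl ipP) !(ipZl ipP); ring.
- by move=> p q; rewrite /dsum_ip (ipC ipP p.1) (ipC ipP p.2) rmorphD.
- by move=> p; rewrite addr_ge0.
- move=> [p q]; rewrite /dsum_ip /= => /eqP; rewrite paddr_eq0 //.
  by case/andP => /eqP/ip_definite -> /eqP/ip_definite ->.
Qed.

Lemma hnorm_dsum_inl (R : realType) (V : lmodType R[i]) (ip : V -> V -> R[i]) :
  is_inner_product ip -> forall x : V, hnorm (dsum_ip ip) (x, 0) = hnorm ip x.
Proof. by move=> ipP x; rewrite /hnorm /dsum_ip /= (ip0l ipP) addr0. Qed.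

Section Estimate.
Variables (R : realType) (V : lmodType R[i]) (ip : V -> V -> R[i]).
Hypothesis ipP : is_inner_product ip.
Local Notation hnorm := (hnorm ip).

Variables A B X As Bs : V -> V.
Hypotheses (AD : forall x y, A (x + y) = A x + A y) (AZ : forall a x, A (a *: x) = a *: A x).
Hypotheses (BD : forall x y, B (x + y) = B x + B y) (BZ : forall a x, B (a *: x) = a *: B x).
Hypotheses (XD : forall x y, X (x + y) = X x + X y) (XZ : forall a x, X (a *: x) = a *: X x).
Hypotheses (adjA : is_adjoint ip A As) (adjB : is_adjoint ip B Bs).
Variables MA MB MX : R.
Hypotheses (MA_gt0 : 0 < MA) (MB_gt0 : 0 < MB) (MX_gt0 : 0 < MX).
Hypothesis A_le : forall x, hnorm (A x) <= MA * hnorm x.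
Hypothesis B_le : forall x, hnorm (B x) <= MB * hnorm x.
Hypothesis X_le : forall x, hnorm (X x) <= MX * hnorm x.

Let gram x := As (A x) + Bs (B x).
Let rotAsXB (u : R[i]) x := u *: As (X (B x)).
Let sylv x := A (As (X x)) + X (B (Bs x)).
Let diag_op := opmx (fun x => X (B (As x))) (fun _ => 0) (fun _ => 0) (fun x => B (As (X x))).

Lemma Re_ip_gram x : Re (ip (gram x) x) = hnorm (A x) ^+ 2 + hnorm (B x) ^+ 2.
Proof.
by rewrite ipDl // raddfD /= -(ip_adjointr ipP adjA) -(ip_adjointr ipP adjB) !sqr_hnorm.
Qed.

Lemma hnorm_gram_le x : hnorm (gram x) <= (MA ^+ 2 + MB ^+ 2) * hnorm x.
Proof.
apply: le_trans (hnormD_le ipP _ _) _; rewrite mulrDl; apply: lerD.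
- apply: le_trans (adjoint_bounded ipP adjA A_le _) _.
  by rewrite expr2 -mulrA ler_wpM2l ?(ltW MA_gt0) ?A_le.
- apply: le_trans (adjoint_bounded ipP adjB B_le _) _.
  by rewrite expr2 -mulrA ler_wpM2l ?(ltW MB_gt0) ?B_le.
Qed.

Lemma rotAsXB_D u x y : rotAsXB u (x + y) = rotAsXB u x + rotAsXB u y.
Proof. by rewrite /rotAsXB BD XD (adjointD ipP adjA) scalerDr. Qed.

Lemma rotAsXB_Z u a x : rotAsXB u (a *: x) = a *: rotAsXB u x.
Proof. by rewrite /rotAsXB BZ XZ (adjointZ ipP adjA) !scalerA mulrC. Qed.

Lemma hnorm_rotAsXB_le u :
  `|u| = 1 -> forall x, hnorm (rotAsXB u x) <= MA * MX * MB * hnorm x.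
Proof.
move=> u1 x; rewrite (hnormZ_unit ipP) //.
apply: le_trans (adjoint_bounded ipP adjA A_le _) _.
rewrite -!mulrA ler_wpM2l ?(ltW MA_gt0) //.
by apply: le_trans (X_le _) _; rewrite ler_wpM2l ?(ltW MX_gt0) ?B_le.
Qed.

Lemma realform_rotAsXB u p q :
  realform ip (rotAsXB u) p q = Re (u * ip (X (B p)) (A q)) + Re (u * ip (X (B q)) (A p)).
Proof. by rewrite /realform /rotAsXB !(ipZl ipP) -!(ip_adjointr ipP adjA). Qed.

Lemma realform_rotAsXB_le_gram u : `|u| = 1 ->
  forall x, realform ip (rotAsXB u) x x <= MX * Re (ip (gram x) x).
Proof.
move=> u1 x; rewrite realform_rotAsXB Re_ip_gram.
have := Re_rotate_ip_le ipP (X (B x)) (A x) u1.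
have : hnorm (X (B x)) * hnorm (A x) <= MX * hnorm (B x) * hnorm (A x).
  by rewrite ler_wpM2r ?hnorm_ge0 ?X_le.
have := mulr_ge0 (ltW MX_gt0) (sqr_ge0 (hnorm (A x) - hnorm (B x))).
nra.
Qed.

Lemma realform_rotAsXB_gram_le u (n w : R) : `|u| = 1 -> 0 <= n ->
  (forall b, hnorm (sylv b) <= n * hnorm b) ->
  (forall a b, Re (u * (ip (X (B (As a))) a + ip (B (As (X b))) b))
                 <= w * (hnorm a ^+ 2 + hnorm b ^+ 2)) ->
  forall x, realform ip (rotAsXB u) (gram x) x <= (w + n / 2) * Re (ip (gram x) x).
Proof.
move=> u1 n_ge0 sylv_le diag_le x; rewrite Re_ip_gram.
set a := A x; set b := B x.
have -> : realform ip (rotAsXB u) (gram x) x =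
    Re (u * (ip (X (B (As a))) a + ip (B (As (X b))) b)) + Re (u * ip (sylv b) a).
  rewrite realform_rotAsXB /gram BD XD AD (ipDl ipP) (ipDr ipP).
  rewrite (ip_adjointr ipP adjA (X b) (As a)) -adjA.
  rewrite (ip_adjointr ipP adjA (X b) (Bs b)) -adjB.
  by rewrite (ipDl ipP) !mulrDr !raddfD /=; lra.
have := Re_rotate_ip_le ipP (sylv b) a u1.
have : hnorm (sylv b) * hnorm a <= n * hnorm b * hnorm a by rewrite ler_wpM2r ?hnorm_ge0.
have := mulr_ge0 n_ge0 (sqr_ge0 (hnorm a - hnorm b)).
have := diag_le a b; nra.
Qed.

Lemma sylvZ a x : sylv (a *: x) = a *: sylv x.
Proof. by rewrite /sylv XZ (adjointZ ipP adjA) AZ (adjointZ ipP adjB) BZ XZ scalerDr. Qed.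

Lemma diag_opZ a z : diag_op (a *: z) = a *: diag_op z.
Proof.
case: z => p q; rewrite /diag_op /opmx /= (adjointZ ipP adjA) BZ XZ XZ (adjointZ ipP adjA) BZ.
by rewrite !addr0 !add0r.
Qed.

Lemma Re_normc_ip_AsXB_le (n w : R) x0 :
  (forall b, hnorm b = 1 -> hnorm (sylv b) <= n) ->
  (forall z, Defs.hnorm (dsum_ip ip) z = 1 -> Re `|dsum_ip ip (diag_op z) z| <= w) ->
  hnorm x0 = 1 -> Re `|ip (As (X (B x0))) x0| <= 1 / 4 * n + 1 / 2 * w.
Proof.
move=> sylv_unit diag_unit x0_unit.
have dsumP := dsum_is_inner_product ipP.
have n_ge0 : 0 <= n := le_trans (hnorm_ge0 _ _) (sylv_unit _ x0_unit).
have w_ge0 : 0 <= w.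
  by apply: le_trans (Re_normc_ge0 _) (diag_unit (x0, 0) _); rewrite hnorm_dsum_inl.
have [u u1 u_rot] := unit_rotation (ip (As (X (B x0))) x0).
have diag_le a b : Re (u * (ip (X (B (As a))) a + ip (B (As (X b))) b))
                     <= w * (hnorm a ^+ 2 + hnorm b ^+ 2).
  apply: le_trans (Re_rotate_le_normc _ u1) _.
  have := numrad_le_of_unit dsumP diag_opZ diag_unit (a, b).
  by rewrite (sqr_hnorm dsumP) /dsum_ip /= addr0 add0r raddfD /= -!(sqr_hnorm ipP).
have c_ge0 : 0 <= w + n / 2 by rewrite addr_ge0 ?divr_ge0.
have sylv_le := hnorm_le_of_unit ipP sylvZ sylv_unit.
have := realform_le_of_compression ipP (rotAsXB_D u) (rotAsXB_Z u)
  (hnorm_rotAsXB_le u1) hnorm_gram_le MX_gt0 c_ge0 (realform_rotAsXB_le_gram u1)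
  (realform_rotAsXB_gram_le u1 n_ge0 sylv_le diag_le) x0_unit.
by rewrite /realform /rotAsXB (ipZl ipP) u_rot; lra.
Qed.

End Estimate.

Theorem mainTheorem7 (R : realType) (V : lmodType R[i]) (ip : V -> V -> R[i])
  (hH : is_hilbert ip)
  (A B X As Bs : V -> V)
  (hA : bounded_op ip A) (hB : bounded_op ip B) (hX : bounded_op ip X)
  (hAs : is_adjoint ip A As) (hBs : is_adjoint ip B Bs) :
  (numrad ip (fun x => As (X (B x)))
   <= (1 / 4 : R)%:E * opnorm ip (fun x => (A (As (X x)) + X (B (Bs x)))%R)
      + (1 / 2 : R)%:E * numrad (dsum_ip ip)
          (opmx (fun x => X (B (As x))) (fun _ => 0%R) (fun _ => 0%R)
                (fun x => B (As (X x)))))%E.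
Proof.
have [ipP _] := hH.
have [AD AZ /exists_pos_bound[MA MA_gt0 A_le]] := hA.
have [BD BZ /exists_pos_bound[MB MB_gt0 B_le]] := hB.
have [XD XZ /exists_pos_bound[MX MX_gt0 X_le]] := hX.
apply: ge_ereal_sup => _ [x0 x0_unit <-].
apply: lee_pos_combination => // [||n w opnorm_n numrad_w].
- by apply: lt_le_trans (ltNyr _) (ereal_sup_ubound _); exists x0.
- apply: lt_le_trans (ltNyr _) (ereal_sup_ubound _).
  by exists (x0, 0); rewrite //= hnorm_dsum_inl.
apply: (Re_normc_ip_AsXB_le ipP AD AZ BD BZ XD XZ hAs hBs MA_gt0 MB_gt0 MX_gt0 A_le B_le X_le)
  => // [b b_unit|z z_unit]; rewrite -lee_fin.
- by rewrite -opnorm_n; apply: ereal_sup_ubound; exists b.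
- by rewrite -numrad_w; apply: ereal_sup_ubound; exists z.
Qed.
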